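(* The set $S'=\{PQ-QP : P,Q \text{ prime words}\}$ generates the ideal $\mathcal{J}$ (as a two-sided ideal of $\mathcal{A}$).
   Context: $\mathcal{A}$ is the free associative $\mathbb{C}$-algebra on noncommuting generators $L,R$; words are finite products of these letters. A word is balanced if it contains equally many $L$'s and $R$'s. $\mathcal{J}$ is the two-sided ideal generated by $S=\{FG-GF : F,G \text{ nonempty balanced words}\}$. A word is prime if it is nonempty, balanced, and cannot be written as a product of two nonempty balanced words. *)

From HB Require Import structures.
From mathcomp Require Import all_boot all_order all_algebra.
From mathcomp Require Import Rstruct complex.
From Stdlib Require Import Rdefinitions.
Set Implicit Arguments. Unset Strict Implicit. Unset Printing Implicit Defensive.
Import Order.TTheory GRing.Theory Num.Theory.
Local Open Scope ring_scope.

Definition C : Type := complex Rdefinitions.R.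

Definition letter := bool.
Definition Lt : letter := true.
Definition Rt : letter := false.
Definition word := seq letter.

Definition balanced (w : word) : bool := count (pred1 Lt) w == count (pred1 Rt) w.

Definition prime_word (w : word) : Prop :=
  w != [::] /\ balanced w /\
  ~ (exists u v : word, [/\ u != [::], v != [::], balanced u, balanced v & w = u ++ v]).

(* Elements of the free associative C-algebra A = C<L,R> are represented by
   their coefficient functions word -> C with finite support; the basis
   element of a word w is [mono w]. *)
Definition series := word -> C.

Definition is_poly (f : series) : Prop :=
  exists s : seq word, forall w, f w != 0 -> w \in s.

Definition szero : series := fun _ => 0.
Definition sadd (f g : series) : series := fun w => f w + g w.
Definition ssub (f g : series) : series := fun w => f w - g w.
(* product in A: concatenation of words, extended bilinearly *)
Definition smul (f g : series) : series :=
  fun w => \sum_(i < (size w).+1) f (take i w) * g (drop i w).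
Definition mono (u : word) : series := fun w => (w == u)%:R.

Inductive gen_ideal (X : series -> Prop) : series -> Prop :=
| gen_ideal0 : gen_ideal X szero
| gen_idealM (a x b : series) :
    is_poly a -> is_poly b -> X x -> gen_ideal X (smul (smul a x) b)
| gen_idealD (p q : series) :
    gen_ideal X p -> gen_ideal X q -> gen_ideal X (sadd p q).

Definition S_set : series -> Prop :=
  fun p => exists F G : word, [/\ F != [::], G != [::], balanced F, balanced G &
                                 p = ssub (mono (F ++ G)) (mono (G ++ F))].

Definition S'_set : series -> Prop :=
  fun p => exists P Q : word, [/\ prime_word P, prime_word Q &
                                 p = ssub (mono (P ++ Q)) (mono (Q ++ P))].

Definition J_ideal : series -> Prop := gen_ideal S_set.

(* S' is contained in S, so one inclusion is immediate.  Conversely, every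
   nonempty balanced word is a product of prime words (peel off its shortest
   nonempty balanced prefix).  Modulo the ideal generated by S', a prime word
   commutes with every prime word, hence with every balanced word, and then
   any two balanced words commute; so S lies in that ideal. *)
From mathcomp Require Import all_boot all_algebra.
From mathcomp Require Import Rstruct complex zify.
From Stdlib Require Import FunctionalExtensionality.
Set Implicit Arguments. Unset Strict Implicit. Unset Printing Implicit Defensive.
Import GRing.Theory.
Local Open Scope ring_scope.

Lemma smulA f g h : smul (smul f g) h = smul f (smul g h).
Proof.
(* Both sides are the sum of f (w[0,i)) * g (w[i,j)) * h (w[j,n)) over i <= j. *)
apply: functional_extensionality => w; rewrite /smul.
set n := size w.
transitivity (\sum_(j < n.+1) \sum_(i < n.+1 | (i <= j)%N)
   f (take i w) * g (drop i (take j w)) * h (drop j w)).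
  apply: eq_bigr => j _.
  have hj : (j <= n)%N by rewrite -ltnS ltn_ord.
  rewrite size_takel // big_distrl /=.
  rewrite (big_ord_widen n.+1
    (fun i => f (take i (take j w)) * g (drop i (take j w)) * h (drop j w))) //.
  by apply: eq_bigr => i hi; rewrite take_takel.
rewrite (exchange_big_dep xpredT) //=; apply: eq_bigr => i _.
have hi : (i <= n)%N by rewrite -ltnS ltn_ord.
rewrite big_distrr /= size_drop -/n.
set F := fun j => f (take i w) * g (drop i (take j w)) * h (drop j w).
transitivity (\sum_(i <= j < n.+1) F j).
  by rewrite big_geq_mkord; apply: eq_bigl => j.
rewrite -{1}(add0n i) big_addn subSn // big_mkord.
by apply: eq_bigr => k _; rewrite /F take_drop drop_drop mulrA.
Qed.

Lemma smulDl f g h : smul (sadd f g) h = sadd (smul f h) (smul g h).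
Proof.
apply: functional_extensionality => w; rewrite /smul /sadd -big_split /=.
by apply: eq_bigr => i _; rewrite mulrDl.
Qed.

Lemma smulDr f g h : smul f (sadd g h) = sadd (smul f g) (smul f h).
Proof.
apply: functional_extensionality => w; rewrite /smul /sadd -big_split /=.
by apply: eq_bigr => i _; rewrite mulrDr.
Qed.

Lemma smulBl f g h : smul (ssub f g) h = ssub (smul f h) (smul g h).
Proof.
apply: functional_extensionality => w; rewrite /smul /ssub -sumrB /=.
by apply: eq_bigr => i _; rewrite mulrBl.
Qed.

Lemma smulBr f g h : smul f (ssub g h) = ssub (smul f g) (smul f h).
Proof.
apply: functional_extensionality => w; rewrite /smul /ssub -sumrB /=.
by apply: eq_bigr => i _; rewrite mulrBr.
Qed.

Lemma smul0l f : smul szero f = szero.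
Proof.
apply: functional_extensionality => w.
by apply: big1 => i _; rewrite mul0r.
Qed.

Lemma smul0r f : smul f szero = szero.
Proof.
apply: functional_extensionality => w.
by apply: big1 => i _; rewrite mulr0.
Qed.

Lemma smul_monol u g w :
  smul (mono u) g w = (take (size u) w == u)%:R * g (drop (size u) w).
Proof.
rewrite /smul /mono.
have [hu|hu] := leqP (size u) (size w).
  rewrite (bigD1 (Ordinal (hu : (size u < (size w).+1)%N))) //= big1 ?addr0 //.
  move=> i /eqP ne_iu; rewrite [take i w == u](introF eqP) ?mul0r // => e.
  by apply/ne_iu/val_inj; rewrite /= -e size_takel // -ltnS ltn_ord.
have take_neq i : take i w != u.
  by apply: contraTneq hu => <-; rewrite -leqNgt size_take_min geq_minr.
rewrite (negbTE (take_neq _)) mul0r big1 // => i _.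
by rewrite (negbTE (take_neq _)) mul0r.
Qed.

Lemma smul1l f : smul (mono [::]) f = f.
Proof.
by apply: functional_extensionality => w; rewrite smul_monol take0 drop0 mul1r.
Qed.

Lemma smul1r f : smul f (mono [::]) = f.
Proof.
apply: functional_extensionality => w; rewrite /smul /mono big_ord_recr /=.
rewrite take_size drop_size eqxx mulr1 big1 ?add0r // => i _.
by rewrite -size_eq0 size_drop subn_eq0 leqNgt ltn_ord mulr0.
Qed.

Lemma mono_mul u v : smul (mono u) (mono v) = mono (u ++ v).
Proof.
apply: functional_extensionality => w; rewrite smul_monol /mono.
have [->|ne] := eqVneq w (u ++ v).
  by rewrite take_size_cat // drop_size_cat // !eqxx mulr1.
have [e1|] := eqVneq (take (size u) w) u; last by rewrite mul0r.
have [e2|] := eqVneq (drop (size u) w) v; last by rewrite mulr0.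
by move: ne; rewrite -(cat_take_drop (size u) w) e1 e2 eqxx.
Qed.

Lemma poly_mono u : is_poly (mono u).
Proof.
by exists [:: u] => w; rewrite /mono inE; case: (w == u); rewrite ?eqxx.
Qed.

Lemma poly_smul a b : is_poly a -> is_poly b -> is_poly (smul a b).
Proof.
move=> [sa ha] [sb hb]; exists [seq x ++ y | x <- sa, y <- sb] => w.
apply: contraR => w_notin; apply/eqP/big1 => i _.
have [/eqP->|/ha take_in] := boolP (a (take i w) == 0); first by rewrite mul0r.
have [/eqP->|/hb drop_in] := boolP (b (drop i w) == 0); first by rewrite mulr0.
by case/negP: w_notin; rewrite -(cat_take_drop i w) allpairs_f.
Qed.

Section GeneratedIdeal.

Variable X : series -> Prop.

Lemma gen_idealMl a p : is_poly a -> gen_ideal X p -> gen_ideal X (smul a p).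
Proof.
move=> pa; elim=> [|a' x b pa' pb Xx|q r _ Iq _ Ir].
- by rewrite smul0r; exact: gen_ideal0.
- by rewrite -!smulA; apply: gen_idealM => //; exact: poly_smul.
- by rewrite smulDr; exact: gen_idealD.
Qed.

Lemma gen_idealMr p b : is_poly b -> gen_ideal X p -> gen_ideal X (smul p b).
Proof.
move=> pb; elim=> [|a x b' pa pb' Xx|q r _ Iq _ Ir].
- by rewrite smul0l; exact: gen_ideal0.
- by rewrite smulA; apply: gen_idealM => //; exact: poly_smul.
- by rewrite smulDl; exact: gen_idealD.
Qed.

Lemma gen_ideal_gen x : X x -> gen_ideal X x.
Proof.
move=> Xx; rewrite -[x]smul1l -[x in gen_ideal _ x]smul1r.
by apply: gen_idealM => //; exact: poly_mono.
Qed.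

Lemma gen_ideal_min (Y : series -> Prop) p :
  (forall x, Y x -> gen_ideal X x) -> gen_ideal Y p -> gen_ideal X p.
Proof.
move=> YX; elim=> [|a x b pa pb Yx|q r _ Iq _ Ir].
- exact: gen_ideal0.
- by apply: gen_idealMr => //; apply: gen_idealMl => //; exact: YX.
- exact: gen_idealD.
Qed.

Definition mono_eqmod (x y : word) : Prop :=
  gen_ideal X (ssub (mono x) (mono y)).

Lemma mono_eqmod_refl x : mono_eqmod x x.
Proof.
rewrite /mono_eqmod; have -> : ssub (mono x) (mono x) = szero.
  by apply: functional_extensionality => w; rewrite /ssub subrr.
exact: gen_ideal0.
Qed.

Lemma mono_eqmod_trans y x z :
  mono_eqmod x y -> mono_eqmod y z -> mono_eqmod x z.
Proof.
rewrite /mono_eqmod => Ixy Iyz.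
have -> : ssub (mono x) (mono z) =
          sadd (ssub (mono x) (mono y)) (ssub (mono y) (mono z)).
  by apply: functional_extensionality => w; rewrite /ssub /sadd addrA subrK.
exact: gen_idealD.
Qed.

Lemma mono_eqmod_catl u x y : mono_eqmod x y -> mono_eqmod (u ++ x) (u ++ y).
Proof.
rewrite /mono_eqmod -!mono_mul -smulBr.
by apply: gen_idealMl; exact: poly_mono.
Qed.

Lemma mono_eqmod_catr v x y : mono_eqmod x y -> mono_eqmod (x ++ v) (y ++ v).
Proof.
rewrite /mono_eqmod -!mono_mul -smulBl.
by apply: gen_idealMr; exact: poly_mono.
Qed.

End GeneratedIdeal.

Lemma balanced_catl u v : balanced u -> balanced (u ++ v) -> balanced v.
Proof. by rewrite /balanced !count_cat => /eqP->; rewrite eqn_add2l. Qed.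

Lemma prime_prefix w : balanced w -> w != [::] ->
  exists P w', [/\ prime_word P, balanced w' & w = P ++ w'].
Proof.
move=> bw nw.
have ex_prefix : exists n, (0 < n)%N && balanced (take n w).
  by exists (size w); rewrite take_size bw andbT lt0n size_eq0.
case: (ex_minnP ex_prefix) => m /andP[m_gt0 bm] m_min.
have m_le : (m <= size w)%N.
  by apply: m_min; rewrite take_size bw andbT lt0n size_eq0.
exists (take m w), (drop m w); split; last by rewrite cat_take_drop.
- split; first by rewrite -size_eq0 size_takel // -lt0n.
  split=> // -[u [v [nu nv bu _ e]]].
  have size_uv : m = (size u + size v)%N.
    by rewrite -(size_takel m_le) e size_cat.
  have take_u : take (size u) w = u.
    by rewrite -(take_takel _ (leq_addr (size v) _)) -size_uv e take_size_cat.
  have := m_min (size u).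
  rewrite take_u bu lt0n size_eq0 nu size_uv => /(_ isT).
  by rewrite -{2}[size u]addn0 leq_add2l leqn0 size_eq0 (negbTE nv).
- by apply: (balanced_catl bm); rewrite cat_take_drop.
Qed.

Lemma balanced_ind (Pr : word -> Prop) : Pr [::] ->
  (forall P w, prime_word P -> balanced w -> Pr w -> Pr (P ++ w)) ->
  forall w, balanced w -> Pr w.
Proof.
move=> Pr_nil Pr_cons w.
elim: {w}(size w) {-2}w (leqnn (size w)) => [|n IH] w size_w bw.
  by move: size_w; rewrite leqn0 size_eq0 => /eqP->.
have [->//|nw] := eqVneq w [::].
have [P [w' [pP bw' w_eq]]] := prime_prefix bw nw.
have size_P : (0 < size P)%N by rewrite lt0n size_eq0; case: pP.
rewrite w_eq; apply: Pr_cons => //; apply: IH => //.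
by move: size_w; rewrite w_eq size_cat; lia.
Qed.

Lemma mono_eqmod_prime_comm P Q :
  prime_word P -> prime_word Q -> mono_eqmod S'_set (P ++ Q) (Q ++ P).
Proof. by move=> pP pQ; apply: gen_ideal_gen; exists P, Q. Qed.

Lemma mono_eqmod_prime_balanced_comm P G :
  prime_word P -> balanced G -> mono_eqmod S'_set (P ++ G) (G ++ P).
Proof.
move=> pP; elim/balanced_ind => [|Q G' pQ _ IH].
  by rewrite cats0; exact: mono_eqmod_refl.
apply: (mono_eqmod_trans (y := Q ++ P ++ G')).
  by rewrite !catA; apply: mono_eqmod_catr; exact: mono_eqmod_prime_comm.
by rewrite -catA; apply: mono_eqmod_catl.
Qed.

Lemma mono_eqmod_balanced_comm F G :
  balanced F -> balanced G -> mono_eqmod S'_set (F ++ G) (G ++ F).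
Proof.
move=> + bG; elim/balanced_ind => [|P F' pP _ IH].
  by rewrite cats0; exact: mono_eqmod_refl.
apply: (mono_eqmod_trans (y := P ++ G ++ F')).
  by rewrite -catA; apply: mono_eqmod_catl.
by rewrite !catA; apply: mono_eqmod_catr; exact: mono_eqmod_prime_balanced_comm.
Qed.

Theorem lemma4p3 : forall p : series, gen_ideal S'_set p <-> J_ideal p.
Proof.
move=> p; split; apply: gen_ideal_min => x.
- move=> [P [Q [[nP [bP _]] [nQ [bQ _]] ->]]].
  by apply: gen_ideal_gen; exists P, Q; split.
- move=> [F [G [_ _ bF bG ->]]].
  exact: mono_eqmod_balanced_comm.
Qed.
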